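(* Let $\mu$ be a probability measure on $\mathbb{C}$, $X_1,X_2,\ldots$ iid with law $\mu$, $0\le k_n\le n$ deterministic with $k_n = o(n)$, $\xi_l^{(n)}$ a deterministic triangular array, and $L_n(z) := \sum_{j=1}^{n-k_n}\frac{1}{z - X_j} + \sum_{l=1}^{k_n}\frac{1}{z - \xi_l^{(n)}}$. Then there is a set $G \subset (0,\infty)$ of Lebesgue measure zero such that for every $R \in (0,\infty)\setminus G$, \[ \limsup_{n\to\infty}\frac{1}{n}\log\sup_{|z| = R}|L_n(z)| \le 0 \] almost surely. *)

From HB Require Import structures.
From mathcomp Require Import all_boot all_order all_algebra.
From mathcomp Require Import all_classical all_reals all_analysis.
From mathcomp Require Import complex.
Set Implicit Arguments. Unset Strict Implicit. Unset Printing Implicit Defensive.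
Import Order.TTheory GRing.Theory Num.Theory.
Local Open Scope classical_set_scope.
Local Open Scope ring_scope.

(* The complex plane, as a measurable space, is R * R with the product
   (= Borel) sigma-algebra; [toC] identifies a point of R * R with a complex
   number in R[i]. *)
Definition toC (R : realType) (p : R * R) : R[i] := (p.1 +i* p.2)%C.

Definition mutually_independent (d : measure_display) (T : measurableType d)
  (R : realType) (P : probability T R) (d' : measure_display)
  (T' : measurableType d') (X : nat -> T -> T') : Prop :=
  forall (s : seq nat) (B : nat -> set T'), uniq s ->
    (forall i, i \in s -> measurable (B i)) ->
    P (\bigcap_(i in [set i | i \in s]) (X i @^-1` B i)) =
    (\prod_(i <- s) P (X i @^-1` B i))%E.

Definition iid_with_law (d : measure_display) (T : measurableType d)
  (R : realType) (P : probability T R) (d' : measure_display)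
  (T' : measurableType d') (mu : probability T' R) (X : nat -> T -> T') : Prop :=
  [/\ forall i, measurable_fun setT (X i),
      forall i (B : set T'), measurable B -> P (X i @^-1` B) = mu B &
      mutually_independent P X].

(* L_n(z) = sum_{j=1}^{n-k_n} 1/(z - X_j) + sum_{l=1}^{k_n} 1/(z - xi_l^(n)),
   indices shifted to start at 0. *)
Definition resolvent_sum (R : realType) (x : nat -> R[i]) (k : nat -> nat)
  (xi : nat -> nat -> R[i]) (n : nat) (z : R[i]) : R[i] :=
  \sum_(j < n - k n) (z - x j)^-1 + \sum_(l < k n) (z - xi n l)^-1.

(* sup_{|z| = r} |L_n(z)|, as an extended real (equals +oo when unbounded,
   e.g. when a pole lies on the circle). *)
Definition supCircle (R : realType) (f : R[i] -> R[i]) (r : R) : \bar R :=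
  ereal_sup [set (ComplexField.Normc.normc (f z))%:E | z in [set z : R[i] | ComplexField.Normc.normc z = r]].

Definition elog (R : realType) (x : \bar R) : \bar R :=
  match x with
  | EFin r => if (0 < r)%R then (ln r)%:E else -oo%E
  | +oo%E => +oo%E
  | -oo%E => -oo%E
  end.

From HB Require Import structures.
From mathcomp Require Import all_boot all_order all_algebra.
From mathcomp Require Import all_classical all_reals all_analysis.
From mathcomp Require Import complex measurable_realfun.
From mathcomp Require Import ring lra.
Import Order.TTheory GRing.Theory Num.Theory.
Import numFieldNormedType.Exports.
Local Open Scope classical_set_scope.
Local Open Scope ring_scope.

(* The moduli of the n poles of L_n are n random reals, and the radii within
   gap n = 1/(2(n+1)^3) of one of them form a set of Lebesgue measure at most
   2 n gap n, which is summable in n. By Tonelli, for almost every r the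
   expected number of pairs (n, i) with | |pole_(n,i)| - r | < gap n is finite,
   so almost surely such near-misses stop after some n. From then on every pole
   lies at distance at least gap n from the circle |z| = r, whence
   sup_(|z| = r) |L_n(z)| <= n / gap n, a polynomial in n whose logarithm is
   o(n). *)

Section circle_bounds.
Context {R : realType}.
Local Notation normc := (@ComplexField.Normc.normc R).

Lemma ler_dist_dist_normc (z x : R[i]) : `|normc z - normc x| <= normc (z - x).
Proof.
have normcB a b : normc a <= normc (a - b) + normc b by rewrite -{1}(subrK b a) le_normcD.
have normc_sym : normc (x - z) = normc (z - x) by rewrite -normcN opprB.
have := normcB z x; have := normcB x z; rewrite normc_sym ler_norml; lra.
Qed.

Lemma ler_normc_sum (I : Type) (s : seq I) (F : I -> R[i]) :
  normc (\sum_(i <- s) F i) <= \sum_(i <- s) normc (F i).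
Proof.
apply: (big_ind2 (fun a b => normc a <= b)) => //.
- by rewrite ComplexField.Normc.normc0.
- by move=> a1 b1 a2 b2 h1 h2; apply: le_trans (le_normcD _ _) (lerD h1 h2).
Qed.

Lemma ler_normc_sum_inv (a : nat -> R[i]) (n : nat) (z : R[i]) (d : R) : 0 < d ->
  (forall i, (i < n)%N -> d <= `|normc z - normc (a i)|) ->
  normc (\sum_(i < n) (z - a i)^-1) <= n%:R / d.
Proof.
move=> d_gt0 far; apply: le_trans (ler_normc_sum _ _ _) _.
have -> : n%:R / d = \sum_(i < n) d^-1 by rewrite sumr_const card_ord mulr_natl.
apply: ler_sum => i _; have dist := le_trans (far i (ltn_ord i)) (ler_dist_dist_normc _ _).
by rewrite ComplexField.Normc.normcV lef_pV2 ?posrE// (lt_le_trans d_gt0 dist).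
Qed.

Definition pole (x : nat -> R[i]) (k : nat -> nat)
    (xi : nat -> nat -> R[i]) (n i : nat) : R[i] :=
  if (i < n - k n)%N then x i else xi n (i - (n - k n))%N.

Lemma resolvent_sumE (x : nat -> R[i]) k xi n z : (k n <= n)%N ->
  resolvent_sum x k xi n z = \sum_(i < n) (z - pole x k xi n i)^-1.
Proof.
move=> kn_le; rewrite /resolvent_sum -(big_mkord xpredT (fun j => (z - x j)^-1)).
rewrite -(big_mkord xpredT (fun l => (z - xi n l)^-1)).
rewrite -(big_mkord xpredT (fun i => (z - pole x k xi n i)^-1)).
rewrite (big_cat_nat _ (leq_subr (k n) n)) //=.
congr (_ + _).
  by apply: eq_big_nat => i /andP[_ i_lt]; rewrite /pole i_lt.
rewrite -{1}[(n - k n)%N]add0n big_addn subKn //.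
apply: eq_big_nat => i _; rewrite /pole addnK ifF //.
by apply/negbTE; rewrite -leqNgt leq_addl.
Qed.

Lemma supCircle_le (f : R[i] -> R[i]) (r M : R) :
  (forall z, normc z = r -> normc (f z) <= M) -> (supCircle f r <= M%:E)%E.
Proof. by move=> fM; apply: ge_ereal_sup => _ [z /= zr <-]; rewrite lee_fin fM. Qed.

Lemma elog_le_ln (x : \bar R) (M : R) :
  0 < M -> (x <= M%:E)%E -> (elog x <= (ln M)%:E)%E.
Proof.
move=> M_gt0; case: x => [x||] //= xM; last by rewrite leNye.
by case: ifP => x_gt0; rewrite ?leNye// lee_fin ler_ln ?posrE// -lee_fin.
Qed.

End circle_bounds.

Section asymptotics.
Context {R : realType}.

Lemma near_ln_poly_le (c e : R) (p : nat) : 0 < c -> 0 < e ->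
  \forall n \near \oo, ln (c * n.+1%:R ^+ p) <= e * n%:R.
Proof.
(* For n > K: c (n+1)^p <= c 2^p n^p <= (e n)^(p+1) / (p+1)! <= exp (e n). *)
move=> c_gt0 e_gt0; set K := c * 2 ^+ p * p.+1`!%:R / e ^+ p.+1.
exists (Num.trunc K).+1 => // n /= Kn.
have n_ge1 : 1 <= n%:R :> R by rewrite ler1n (leq_trans _ Kn).
have K_lt : K < n%:R by apply: lt_le_trans (truncnS_gt K) _; rewrite ler_nat.
have ep_gt0 : 0 < e ^+ p.+1 by rewrite exprn_gt0.
have fact_gt0 : 0 < p.+1`!%:R :> R by rewrite ltr0n fact_gt0.
have poly_le : c * n.+1%:R ^+ p <= (e * n%:R) ^+ p.+1 / p.+1`!%:R.
  apply: (@le_trans _ _ (c * 2 ^+ p * n%:R ^+ p)).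
    rewrite -mulrA ler_wpM2l ?(ltW c_gt0)// -exprMn lerXn2r ?nnegrE//.
    by rewrite -natr1; lra.
  have -> : (e * n%:R) ^+ p.+1 = e ^+ p.+1 * n%:R * n%:R ^+ p.
    by rewrite exprMn [n%:R ^+ p.+1]exprS mulrA.
  rewrite ler_pdivlMr// mulrAC ler_wpM2r ?exprn_ge0//.
  by rewrite [_ * n%:R]mulrC -ler_pdivrMr// ltW.
rewrite -ler_expR lnK ?posrE ?mulr_gt0 ?exprn_gt0//.
apply: le_trans poly_le (le_trans _ (expR_ge1Dxn p _)); first by rewrite lerDr.
by rewrite mulr_ge0 ?(ltW e_gt0)//; lra.
Qed.

Lemma limn_esup_le0 (u : (\bar R)^nat) :
  (forall e, 0 < e -> \forall n \near \oo, (u n <= e%:E)%E) -> (limn_esup u <= 0)%E.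
Proof.
move=> u_small; apply/lee_addgt0Pr => e e_gt0; rewrite add0e.
apply: ge_ereal_inf; exists (ereal_sup (u @` [set n | (u n <= e%:E)%E])).
  by exists [set n | (u n <= e%:E)%E] => //; exact: u_small.
by apply: ge_ereal_sup => _ [n /= ? <-].
Qed.

Lemma near_nneseries_term_lt {e : R} {u : (\bar R)^nat} : 0 < e ->
  (forall n, (0 <= u n)%E) -> (\sum_(n <oo) u n < +oo)%E ->
  \forall n \near \oo, (u n < e%:E)%E.
Proof.
move=> e_gt0 u_ge0 u_fin.
have /fine_cvgP[tail_fin tail_cvg0] := nneseries_tail_cvg u_fin (fun n _ => u_ge0 n).
apply: filterS2 tail_fin (cvgr_lt _ tail_cvg0 _ e_gt0) => n fin_n tail_lt.
apply: le_lt_trans (_ : (\sum_(n <= k <oo) u k < e%:E)%E); last by rewrite -(fineK fin_n) lte_fin.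
have := @nneseries_lim_ge R u xpredT n n.+1 (fun k _ _ => u_ge0 k).
by rewrite big_nat1.
Qed.

End asymptotics.

Section points_avoid_almost_every_radius.
Context {R : realType} {d : measure_display} {Omega : measurableType d}.
Variables (P : probability Omega R) (c : nat -> nat -> Omega -> R) (delta : nat -> R).
Hypothesis measurable_c : forall n i, measurable_fun setT (c n i).
Hypothesis delta_gt0 : forall n, 0 < delta n.
Hypothesis delta_summable : (\sum_(n <oo) (n%:R * (2 * delta n))%:E < +oo)%E.
Local Notation mR := (measurableTypeR R).
Local Notation leb := (@lebesgue_measure R).

Definition close n i : set (Omega * mR) := [set p | `|c n i p.1 - p.2| < delta n].

Definition close_count n (p : Omega * mR) : \bar R :=
  (\sum_(i < n) (\1_(close n i) p)%:E)%E.

Definition total_close_count (p : Omega * mR) : \bar R := (\sum_(n <oo) close_count n p)%E.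

Lemma measurable_close n i : measurable (close n i).
Proof.
have -> : close n i = (fun p => c n i p.1 - p.2) @^-1` `]- delta n, delta n[.
  by apply/seteqP; split => p; rewrite /close /= in_itv /= ltr_norml.
rewrite -[_ @^-1` _]setTI; apply: measurable_funB (measurable_itv _) => //.
exact: measurableT_comp (measurable_c n i) measurable_fst.
Qed.

Lemma close_count_ge0 n p : (0 <= close_count n p)%E.
Proof. by apply: sume_ge0 => i _; rewrite lee_fin /indic; case: (_ \in _). Qed.

Lemma measurable_close_count n : measurable_fun setT (close_count n).
Proof.
apply: emeasurable_sum => i; apply/measurable_EFinP.
exact: measurable_indic (measurable_close n i).
Qed.

Lemma total_close_count_ge0 p : (0 <= total_close_count p)%E.
Proof. by apply: nneseries_ge0 => n _ _; exact: close_count_ge0. Qed.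

Lemma measurable_total_close_count : measurable_fun setT total_close_count.
Proof.
exact: ge0_emeasurable_sum (fun n p _ _ => close_count_ge0 n p)
  (fun n _ => measurable_close_count n).
Qed.

Lemma integral_close n i w : (\int[leb]_r (\1_(close n i) (w, r))%:E = (2 * delta n)%:E)%E.
Proof.
transitivity (\int[leb]_r (\1_(ball (c n i w) (delta n)) r)%:E)%E.
  by apply: eq_integral => r _; rewrite /indic.
rewrite integral_indic //; last exact: measurable_ball.
rewrite setIT ball_itv.
apply: eq_trans (lebesgue_measure_itv `]c n i w - delta n, c n i w + delta n[) _.
rewrite /= lte_fin ifT; last by have := delta_gt0 n; lra.
by rewrite -EFinB; congr EFin; lra.
Qed.

Lemma integral_close_count n w :
  (\int[leb]_r close_count n (w, r) = (n%:R * (2 * delta n))%:E)%E.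
Proof.
rewrite ge0_integral_sum //; last first.
  move=> i; apply/measurable_EFinP.
  exact: measurableT_comp (measurable_indic (measurable_close n i)) (pair1_measurable w).
under eq_bigr do rewrite integral_close.
by rewrite sumEFin sumr_const card_ord [in RHS]mulr_natl.
Qed.

Lemma integral_total_close_count w :
  (\int[leb]_r total_close_count (w, r) = \sum_(n <oo) (n%:R * (2 * delta n))%:E)%E.
Proof.
rewrite integral_nneseries //; last by move=> n r _; exact: close_count_ge0.
  by apply: eq_eseriesr => n _; exact: integral_close_count.
by move=> n; exact: measurableT_comp (measurable_close_count n) (pair1_measurable w).
Qed.

Definition expected_close_count (r : mR) : \bar R := (\int[P]_w total_close_count (w, r))%E.

Lemma integrable_expected_close_count : leb.-integrable setT expected_close_count.
Proof.
have tcc_ge0 := total_close_count_ge0.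
have mtcc := measurable_total_close_count.
apply/integrableP; split; first exact: measurable_fun_fubini_tonelli_G.
under eq_integral do rewrite gee0_abs ?integral_ge0//.
rewrite -(fubini_tonelli _ mtcc tcc_ge0) /=.
under eq_integral do rewrite integral_total_close_count.
by rewrite integral_cst //= [X in (_ * X)%E]probability_setT mule1.
Qed.

Definition exceptional_radii : set mR :=
  [set r | ~ (expected_close_count r \is a fin_num)].

Lemma negligible_exceptional_radii : leb.-negligible exceptional_radii.
Proof.
have [N [mN N0 fin_off_N]] := integrable_ae measurableT integrable_expected_close_count.
by exists N; split => // r r_exc; apply: fin_off_N => /(_ I).
Qed.

Lemma ae_total_close_count_fin (r : mR) : ~ exceptional_radii r ->
  {ae P, forall w, total_close_count (w, r) \is a fin_num}.
Proof.
move=> r_reg.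
have mF : measurable_fun setT (fun w => total_close_count (w, r)).
  exact: measurableT_comp measurable_total_close_count (pair2_measurable r).
have F_int : P.-integrable setT (fun w => total_close_count (w, r)).
  apply/integrableP; split => //.
  under eq_integral do rewrite gee0_abs ?total_close_count_ge0//.
  rewrite -ge0_fin_numE; first exact: contrapT r_reg.
  by apply: integral_ge0 => w _; exact: total_close_count_ge0.
have [N [mN N0 fin_off_N]] := integrable_ae measurableT F_int.
by exists N; split => // w w_inf; apply: fin_off_N => fin_w; apply: w_inf => /=; exact: fin_w.
Qed.

Lemma near_far_of_total_close_count_fin w (r : mR) :
  total_close_count (w, r) \is a fin_num ->
  \forall n \near \oo, forall i, (i < n)%N -> delta n <= `|c n i w - r|.
Proof.
move=> fin_wr; have count_fin : (total_close_count (w, r) < +oo)%E.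
  by rewrite -ge0_fin_numE// total_close_count_ge0.
apply: filterS (near_nneseries_term_lt ltr01 (fun n => close_count_ge0 n (w, r)) count_fin).
move=> n count_lt1 i i_lt; rewrite leNgt; apply/negP => close_i.
suff : (1%:E <= close_count n (w, r))%E by rewrite leNgt count_lt1.
rewrite /close_count (bigD1 (Ordinal i_lt)) //= /indic mem_set // leeDl //.
by apply: sume_ge0 => j _; rewrite lee_fin /indic; case: (_ \in _).
Qed.

Lemma ae_near_far (r : mR) : ~ exceptional_radii r ->
  {ae P, forall w, \forall n \near \oo, forall i, (i < n)%N -> delta n <= `|c n i w - r|}.
Proof.
move=> /ae_total_close_count_fin; apply: filterS => w.
exact: near_far_of_total_close_count_fin.
Qed.

End points_avoid_almost_every_radius.

Section resolvent_growth.
Context {R : realType}.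
Local Notation normc := (@ComplexField.Normc.normc R).

Definition gap (n : nat) : R := (2 * n.+1%:R ^+ 3)^-1.

Lemma gap_gt0 n : 0 < gap n.
Proof. by rewrite invr_gt0 mulr_gt0// exprn_gt0. Qed.

Lemma gap_partial_sum_le N : \sum_(0 <= n < N) n%:R * (2 * gap n) <= 1 - N.+1%:R^-1.
Proof.
elim: N => [|N IH]; first by rewrite big_geq // invr1 subrr.
rewrite big_nat_recr //=; apply: le_trans (lerD IH (lexx _)) _.
rewrite /gap; set a : R := N%:R.
have -> : N.+1%:R = a + 1 :> R by rewrite -natr1.
have -> : N.+2%:R = a + 2 :> R by rewrite -!natr1 /a; lra.
have a_ge0 : 0 <= a by rewrite ler0n.
rewrite -subr_ge0.
have -> : 1 - (a + 2)^-1 - (1 - (a + 1)^-1 + a * (2 / (2 * (a + 1) ^+ 3))) =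
    ((a + 1) ^+ 3 * (a + 2))^-1.
  by field; lra.
by rewrite invr_ge0 mulr_ge0 ?exprn_ge0 //; lra.
Qed.

Lemma gap_summable : (\sum_(n <oo) (n%:R * (2 * gap n))%:E < +oo)%E.
Proof.
apply: le_lt_trans (ltry 1); apply: lime_le.
  by apply: is_cvg_nneseries => n _ _; rewrite lee_fin !mulr_ge0 // ltW // gap_gt0.
by apply: nearW => N; rewrite sumEFin lee_fin (le_trans (gap_partial_sum_le N)).
Qed.

Lemma limn_esup_log_resolvent_le0 (x : nat -> R[i]) (k : nat -> nat)
    (xi : nat -> nat -> R[i]) (r : R) :
  (forall n, (k n <= n)%N) ->
  (\forall n \near \oo, forall i, (i < n)%N -> gap n <= `|normc (pole x k xi n i) - r|) ->
  (limn_esup (fun n => (n%:R^-1)%:E * elog (supCircle (resolvent_sum x k xi n) r)) <= 0)%E.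
Proof.
move=> k_le far; apply: limn_esup_le0 => e e_gt0.
apply: filterS3 far (nbhs_infty_ge 1) (near_ln_poly_le 2 e 4 (ltr0Sn _ 1) e_gt0).
move=> n far_n n_ge1 ln_le.
have bound_gt0 : 0 < 2 * n.+1%:R ^+ 4 :> R by rewrite mulr_gt0 ?exprn_gt0.
have sup_le : (supCircle (resolvent_sum x k xi n) r <= (2 * n.+1%:R ^+ 4)%:E)%E.
  apply: supCircle_le => z zr; rewrite resolvent_sumE //.
  apply: le_trans (ler_normc_sum_inv (pole x k xi n) n z _ (gap_gt0 n) _) _.
    by move=> i i_lt; rewrite zr distrC far_n.
  rewrite /gap invrK mulrCA ler_wpM2l ?mulr_ge0 ?exprn_ge0 // exprS ler_wpM2r ?exprn_ge0 //.
  by rewrite ler_nat.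
have n_inv_ge0 : (0 <= (n%:R^-1)%:E :> \bar R)%E by rewrite lee_fin invr_ge0.
apply: le_trans (lee_wpmul2l n_inv_ge0 (elog_le_ln _ _ bound_gt0 sup_le)) _.
by rewrite -EFinM lee_fin mulrC ler_pdivrMr ?ltr0n.
Qed.

End resolvent_growth.

Lemma measurable_normc_toC (R : realType) :
  measurable_fun setT (fun p : R * R => ComplexField.Normc.normc (toC p)).
Proof.
have -> : (fun p : R * R => ComplexField.Normc.normc (toC p)) =
    (fun p => Num.sqrt (p.1 ^+ 2 + p.2 ^+ 2)) by apply/funext; case.
apply: measurableT_comp; first exact: continuous_measurable_fun (@sqrt_continuous R).
by apply: measurable_funD; apply: measurable_funX;
  [exact: measurable_fst | exact: measurable_snd].
Qed.

Theorem mainTheorem17 (R : realType)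
  (mu : probability (R * R)%type R)
  (d : measure_display) (Omega : measurableType d) (P : probability Omega R)
  (X : nat -> Omega -> (R * R)%type)
  (k : nat -> nat) (xi : nat -> nat -> R[i]) :
  iid_with_law P mu X ->
  (forall n, (k n <= n)%N) ->
  ((fun n => (k n)%:R / n%:R) : R^nat) @ \oo --> 0%R ->
  exists G : set R,
    G `<=` `]0, +oo[%classic /\ (@lebesgue_measure R : set R -> \bar R).-negligible G /\
    forall r : R, 0 < r -> ~ G r ->
      {ae P, forall w : Omega,
        (limn_esup (fun n : nat =>
           (n%:R^-1)%:E * elog (supCircle (resolvent_sum (fun j => toC (X j w)) k xi n) r))
         <= 0)%E}.
Proof.
move=> [measurable_X _ _] k_le _.
pose c n i w := ComplexField.Normc.normc (pole (fun j => toC (X j w)) k xi n i).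
have measurable_c n i : measurable_fun setT (c n i).
  rewrite /c /pole; case: (i < n - k n)%N; last exact: measurable_cst.
  exact: measurableT_comp (measurable_normc_toC R) (measurable_X i).
pose G := exceptional_radii P c gap.
have G_negligible := negligible_exceptional_radii P c gap measurable_c gap_gt0 gap_summable.
exists (G `&` `]0, +oo[); split; first exact: subIsetr.
split; first by apply: (negligibleS _ G_negligible); apply: subIsetl.
move=> r r_gt0 Gr; have G_r : ~ G r by move=> ?; apply: Gr; split; rewrite //= in_itv /= r_gt0.
apply: filterS (ae_near_far P c gap measurable_c r G_r) => w.
exact: limn_esup_log_resolvent_le0.
Qed.
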